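(* Assume that for each $i\in I_n$, every equilibrium $u\in\mathbb{R}^n_+$ of the system lying in $\pi_i$ satisfies $\alpha_iu<1$. Then the system has a unique equilibrium $x^*\in\operatorname{int}\mathbb{R}^n_+$, and $x^*\le Y$.
   Context: Fix $n\ge 1$ and $I_n=\{1,\dots,n\}$. Consider the Lotka–Volterra system $x_i'=b_ix_i(1-\alpha_ix)$, $i\in I_n$, where $b_i>0$, $\alpha_i=(a_{i1},\dots,a_{in})$ with $a_{ii}>0$ and $a_{ij}\ge 0$, on $\mathbb{R}^n_+$; $\le$ is componentwise. $Y=(a_{11}^{-1},\dots,a_{nn}^{-1})^T$, $\pi_i=\{x\in\mathbb{R}^n_+:x_i=0\}$. *)

(* the statement is purely order-algebraic, so it is stated
   over an arbitrary real closed field R (which includes the real numbers). *)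
From HB Require Import structures.
From mathcomp Require Import all_boot all_order all_algebra.
Set Implicit Arguments. Unset Strict Implicit. Unset Printing Implicit Defensive.
Import Order.TTheory GRing.Theory Num.Theory.
Local Open Scope ring_scope.

(* Points of R^n are functions 'I_n -> R; the interaction matrix is
   a i j = a_{ij}, so alpha_i = (a i 0, ..., a i (n-1)). *)

Definition alpha_dot (R : ringType) (n : nat) (a : 'I_n -> 'I_n -> R)
  (i : 'I_n) (x : 'I_n -> R) : R := \sum_(j < n) a i j * x j.

Definition nonneg_vec (R : numDomainType) (n : nat) (x : 'I_n -> R) : Prop :=
  forall i, 0 <= x i.

Definition pos_vec (R : numDomainType) (n : nat) (x : 'I_n -> R) : Prop :=
  forall i, 0 < x i.

(* x is an equilibrium in R^n_+ of x_i' = b_i x_i (1 - alpha_i x) *)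
Definition is_equilibrium (R : numDomainType) (n : nat) (b : 'I_n -> R)
  (a : 'I_n -> 'I_n -> R) (x : 'I_n -> R) : Prop :=
  nonneg_vec x /\ forall i, b i * x i * (1 - alpha_dot a i x) = 0.

From HB Require Import structures.
From mathcomp Require Import all_boot all_order all_algebra.
From Stdlib Require Import FunctionalExtensionality.
Set Implicit Arguments. Unset Strict Implicit. Unset Printing Implicit Defensive.
Import Order.TTheory GRing.Theory Num.Theory.
Local Open Scope ring_scope.

(* For S ⊆ I_n let M_S be the principal submatrix (a_ij)_{i,j∈S}
   padded by the identity outside S, and let y_S := adj(M_S) 1_S, so that
   M_S y_S = det(M_S) 1_S (Cramer).  Then y_S vanishes off S and
   α_j y_S = det(M_S) for j ∈ S; when det(M_S) ≠ 0 the point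
   z_S := y_S / det(M_S) is an equilibrium supported in S with α_j z_S = 1 on S.
   By induction on |S| we show det(M_S) > 0 and y_S > 0 on S.  For k ∈ S and
   T = S \ k, the induction hypothesis makes z_T a boundary equilibrium with
   z_T k = 0, so the assumption gives w := 1 - α_k z_T > 0.  Since
   M_S z_T = 1_S - w e_k, applying adj(M_S) and reading coordinate k yields
   y_S k = w · adj(M_S)_kk = w · det(M_T) > 0; then
   det(M_S) = α_k y_S ≥ a_kk y_S k > 0.  For S = I_n, x* := z_{I_n} is the
   interior equilibrium; it is unique since M_{I_n} = (a_ij) is invertible,
   and a_ii x*_i ≤ α_i x* = 1 gives x* ≤ Y. *)

Section CramerVector.
Variables (R : comNzRingType) (n : nat) (a : 'I_n -> 'I_n -> R).

Definition principal_mx (S : {set 'I_n}) : 'M[R]_n :=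
  \matrix_(i, j) if (i \in S) && (j \in S) then a i j else (i == j)%:R.

Definition indicator_col (S : {set 'I_n}) : 'cV[R]_n := \col_i (i \in S)%:R.

Definition cramer_vec (S : {set 'I_n}) : 'I_n -> R :=
  fun i => (\adj (principal_mx S) *m indicator_col S) i 0.

Lemma principal_mx_mul_in (S : {set 'I_n}) (v : 'cV[R]_n) (i : 'I_n) :
  (forall j, j \notin S -> v j 0 = 0) -> i \in S ->
  (principal_mx S *m v) i 0 = alpha_dot a i (fun l => v l 0).
Proof.
move=> v_supp iS; rewrite mxE /alpha_dot; apply: eq_bigr => l _.
rewrite !mxE iS /=; case: (boolP (l \in S)) => lS //=.
by rewrite v_supp // !mulr0.
Qed.

Lemma principal_mx_mul_out (S : {set 'I_n}) (v : 'cV[R]_n) (i : 'I_n) :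
  i \notin S -> (principal_mx S *m v) i 0 = v i 0.
Proof.
move=> iNS; rewrite mxE (bigD1 i) //= big1 => [|l li].
  by rewrite !mxE (negbTE iNS) /= eqxx mul1r addr0.
by rewrite !mxE (negbTE iNS) /= eq_sym (negbTE li) mul0r.
Qed.

Lemma principal_mx_cramer (S : {set 'I_n}) :
  principal_mx S *m (\adj (principal_mx S) *m indicator_col S)
  = \det (principal_mx S) *: indicator_col S.
Proof. by rewrite mulmxA mul_mx_adj mul_scalar_mx. Qed.

Lemma cramer_vec_out (S : {set 'I_n}) (j : 'I_n) :
  j \notin S -> cramer_vec S j = 0.
Proof.
move=> jNS; have := congr1 (fun M : 'cV[R]_n => M j 0) (principal_mx_cramer S).
rewrite /cramer_vec /= principal_mx_mul_out // => ->.
by rewrite !mxE (negbTE jNS) mulr0.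
Qed.

Lemma cramer_vec_alpha (S : {set 'I_n}) (j : 'I_n) :
  j \in S -> alpha_dot a j (cramer_vec S) = \det (principal_mx S).
Proof.
move=> jS; have := congr1 (fun M : 'cV[R]_n => M j 0) (principal_mx_cramer S).
rewrite /cramer_vec /= principal_mx_mul_in //; last by move=> l; apply: cramer_vec_out.
by move=> ->; rewrite !mxE jS mulr1.
Qed.

Lemma adj_principal_mx_diag (S : {set 'I_n}) (k : 'I_n) :
  k \in S -> \adj (principal_mx S) k k = \det (principal_mx (S :\ k)).
Proof.
move=> kS; rewrite mxE (expand_det_row _ k) (bigD1 k) //= big1 ?addr0.
  rewrite !mxE !in_setD1 eqxx /= mul1r /cofactor; congr (_ * \det _).
  apply/matrixP => i j; rewrite !mxE !in_setD1.
  by rewrite [lift k i == k]eq_sym [lift k j == k]eq_sym !(negbTE (neq_lift _ _)).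
by move=> j jk; rewrite !mxE in_setD1 eqxx /= eq_sym (negbTE jk) mul0r.
Qed.

End CramerVector.

Section CramerPoint.
Variables (R : fieldType) (n : nat) (a : 'I_n -> 'I_n -> R).

Definition cramer_point (S : {set 'I_n}) : 'I_n -> R :=
  fun i => cramer_vec a S i / \det (principal_mx a S).

Lemma cramer_point_out (S : {set 'I_n}) (j : 'I_n) :
  j \notin S -> cramer_point S j = 0.
Proof. by move=> jNS; rewrite /cramer_point cramer_vec_out // mul0r. Qed.

Lemma cramer_point_alpha (S : {set 'I_n}) (j : 'I_n) :
  \det (principal_mx a S) != 0 -> j \in S -> alpha_dot a j (cramer_point S) = 1.
Proof.
move=> det_neq0 jS; rewrite /alpha_dot.
under eq_bigr do rewrite /cramer_point mulrA.
by rewrite -mulr_suml -/(alpha_dot a j (cramer_vec a S)) cramer_vec_alpha // divff.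
Qed.

Lemma principal_mx_mul_point (S : {set 'I_n}) (k : 'I_n) :
  k \in S -> \det (principal_mx a (S :\ k)) != 0 ->
  principal_mx a S *m \col_i cramer_point (S :\ k) i
  = indicator_col R S - (1 - alpha_dot a k (cramer_point (S :\ k))) *: delta_mx k 0.
Proof.
move=> kS det_neq0; set z := cramer_point (S :\ k).
have z_out j : j \notin S -> z j = 0.
  by move=> jNS; apply: cramer_point_out; rewrite in_setD1 (negbTE jNS) andbF.
apply/matrixP => i j; rewrite (ord1 j).
case: (boolP (i \in S)) => iS; last first.
  have ik : i != k by apply: contraNneq iS => ->.
  by rewrite principal_mx_mul_out // !mxE z_out // (negbTE iS) (negbTE ik) mulr0 subrr.
rewrite principal_mx_mul_in //; last by move=> l lNS; rewrite mxE z_out.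
have -> : (fun l => (\col_i z i) l 0) = z.
  by apply: functional_extensionality => l; rewrite mxE.
rewrite !mxE iS andbT.
case: (eqVneq i k) => [-> | ik]; first by rewrite mulr1 opprB addrC subrK.
by rewrite mulr0 subr0 cramer_point_alpha // in_setD1 ik.
Qed.

(* Reading coordinate k of adj(M_S) applied to the identity above:
   y_S k = (1 - α_k z_T) det(M_T). *)
Lemma cramer_vec_pivot (S : {set 'I_n}) (k : 'I_n) :
  k \in S -> \det (principal_mx a (S :\ k)) != 0 ->
  cramer_vec a S k
  = (1 - alpha_dot a k (cramer_point (S :\ k))) * \det (principal_mx a (S :\ k)).
Proof.
move=> kS det_neq0.
have := congr1 (fun M => (\adj (principal_mx a S) *m M) k 0)
  (principal_mx_mul_point kS det_neq0).
rewrite /= mulmxA mul_adj_mx mul_scalar_mx mxE mxE cramer_point_out ?setD11 //.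
rewrite mulr0 mulmxBr -scalemxAr -colE [X in 0 = X]mxE -/(cramer_vec a S k).
rewrite -adj_principal_mx_diag // [X in cramer_vec a S k + X]mxE.
rewrite [X in - X]mxE [X in _ * X]mxE.
by move/esym/eqP; rewrite subr_eq0 => /eqP.
Qed.

Lemma alpha_dot_inj (x y : 'I_n -> R) :
  \det (principal_mx a setT) != 0 ->
  (forall i, alpha_dot a i x = alpha_dot a i y) -> x = y.
Proof.
move=> det_neq0 eq_xy.
have mul_col z i : (principal_mx a setT *m \col_j z j) i 0 = alpha_dot a i z.
  by rewrite mxE; apply: eq_bigr => l _; rewrite !mxE !in_setT.
have unit_M : principal_mx a setT \in unitmx by rewrite unitmxE unitfE.
have ker0 : principal_mx a setT *m (\col_j x j - \col_j y j) = 0.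
  apply/matrixP => i j; rewrite (ord1 j) mulmxBr [LHS]mxE [X in _ + X]mxE.
  by rewrite !mul_col eq_xy subrr mxE.
have := congr1 (mulmx (invmx (principal_mx a setT))) ker0.
rewrite mulKmx // mulmx0 => /subr0_eq eq_col; apply: functional_extensionality => i.
by have := congr1 (fun M : 'cV[R]_n => M i 0) eq_col; rewrite !mxE.
Qed.

End CramerPoint.

Section Positivity.
Variables (R : realFieldType) (n : nat) (b : 'I_n -> R) (a : 'I_n -> 'I_n -> R).
Hypothesis a_diag_gt0 : forall i, 0 < a i i.
Hypothesis a_ge0 : forall i j, 0 <= a i j.

Lemma alpha_dot_ge_diag (k : 'I_n) (f : 'I_n -> R) :
  (forall l, 0 <= f l) -> a k k * f k <= alpha_dot a k f.
Proof.
move=> f_ge0; rewrite /alpha_dot (bigD1 k) //= lerDl sumr_ge0 // => l _.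
exact: mulr_ge0.
Qed.

Lemma le_inv_diag (i : 'I_n) (f : 'I_n -> R) :
  (forall l, 0 <= f l) -> alpha_dot a i f = 1 -> f i <= (a i i)^-1.
Proof.
move=> f_ge0 alpha1; rewrite -(mulKf (lt0r_neq0 (a_diag_gt0 i)) (f i)).
rewrite -[leRHS]mulr1; apply: ler_wpM2l; first by rewrite invr_ge0 ltW.
by rewrite -alpha1; apply: alpha_dot_ge_diag.
Qed.

Lemma cramer_point_equilibrium (S : {set 'I_n}) :
  0 < \det (principal_mx a S) -> (forall k, k \in S -> 0 < cramer_vec a S k) ->
  is_equilibrium b a (cramer_point a S).
Proof.
move=> det_gt0 y_gt0; split => i; case: (boolP (i \in S)) => iS.
- exact/ltW/divr_gt0/det_gt0/y_gt0.
- by rewrite cramer_point_out.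
- by rewrite cramer_point_alpha ?gt_eqF // subrr mulr0.
- by rewrite cramer_point_out // mulr0 mul0r.
Qed.

Lemma equilibrium_alpha (x : 'I_n -> R) (i : 'I_n) :
  0 < b i -> is_equilibrium b a x -> 0 < x i -> alpha_dot a i x = 1.
Proof.
move=> b_gt0 [_ x_eq] x_gt0; move: (x_eq i) => /eqP.
by rewrite !mulf_eq0 (gt_eqF b_gt0) (gt_eqF x_gt0) subr_eq0 eq_sym => /eqP.
Qed.

(* If y_S > 0 on S then det(M_S) = α_k y_S ≥ a_kk y_S k > 0 (k ∈ S), and
   det(M_∅) = 1. *)
Lemma det_principal_mx_gt0 (S : {set 'I_n}) :
  (forall k, k \in S -> 0 < cramer_vec a S k) -> 0 < \det (principal_mx a S).
Proof.
move=> y_gt0; case: (set_0Vmem S) => [-> | [k kS]].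
  have -> : principal_mx a set0 = 1%:M by apply/matrixP => i j; rewrite !mxE in_set0.
  by rewrite det1 ltr01.
have y_ge0 l : 0 <= cramer_vec a S l.
  by case: (boolP (l \in S)) => lS; [exact/ltW/y_gt0 | rewrite cramer_vec_out].
rewrite -(cramer_vec_alpha a kS); apply: lt_le_trans (alpha_dot_ge_diag k y_ge0).
exact: mulr_gt0 (a_diag_gt0 k) (y_gt0 k kS).
Qed.

Hypothesis boundary_invasible : forall (i : 'I_n) (u : 'I_n -> R),
  is_equilibrium b a u -> u i = 0 -> alpha_dot a i u < 1.

(* For k ∈ S, positivity on T = S \ k propagates to y_S k: z_T is a boundary
   equilibrium, so y_S k = (1 - α_k z_T) det(M_T) > 0. *)
Lemma cramer_vec_pivot_gt0 (S : {set 'I_n}) (k : 'I_n) : k \in S ->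
  0 < \det (principal_mx a (S :\ k)) ->
  (forall l, l \in S :\ k -> 0 < cramer_vec a (S :\ k) l) ->
  0 < cramer_vec a S k.
Proof.
move=> kS det_gt0 y_gt0; rewrite cramer_vec_pivot ?gt_eqF //.
rewrite pmulr_lgt0 // subr_gt0.
apply: boundary_invasible (cramer_point_equilibrium det_gt0 y_gt0) _.
by rewrite cramer_point_out // setD11.
Qed.

Lemma principal_mx_positive (S : {set 'I_n}) :
  0 < \det (principal_mx a S) /\ forall k, k \in S -> 0 < cramer_vec a S k.
Proof.
move: {2}#|S|.+1 (ltnSn #|S|) => m; elim: m S => [// | m IH] S card_S.
have y_gt0 k : k \in S -> 0 < cramer_vec a S k.
  move=> kS; have card_Sk : (#|S :\ k| < m)%N.
    exact: leq_trans (proper_card (properD1 kS)) card_S.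
  have [det_gt0 yk_gt0] := IH _ card_Sk.
  exact: cramer_vec_pivot_gt0 kS det_gt0 yk_gt0.
by split; first exact: det_principal_mx_gt0.
Qed.

End Positivity.

Theorem lemma5p1 (R : rcfType) (n : nat) (hn : (1 <= n)%N)
  (b : 'I_n -> R) (a : 'I_n -> 'I_n -> R)
  (hb : forall i, 0 < b i)
  (haii : forall i, 0 < a i i)
  (haij : forall i j, 0 <= a i j)
  (hyp : forall (i : 'I_n) (u : 'I_n -> R),
      is_equilibrium b a u -> u i = 0 -> alpha_dot a i u < 1) :
  exists xs : 'I_n -> R,
    [/\ is_equilibrium b a xs, pos_vec xs,
        (forall y : 'I_n -> R, is_equilibrium b a y -> pos_vec y -> y = xs)
      & (forall i, xs i <= (a i i)^-1)].
Proof.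
have [det_gt0 y_gt0] := principal_mx_positive haii haij hyp setT.
have xs_eq : is_equilibrium b a (cramer_point a setT).
  exact: cramer_point_equilibrium.
have xs_pos : pos_vec (cramer_point a setT).
  by move=> i; apply/divr_gt0/det_gt0/y_gt0; rewrite in_setT.
have xs_alpha i : alpha_dot a i (cramer_point a setT) = 1.
  exact: equilibrium_alpha (hb i) xs_eq (xs_pos i).
exists (cramer_point a setT); split => //.
- move=> y y_eq y_pos; apply: (alpha_dot_inj (lt0r_neq0 det_gt0)) => i.
  by rewrite xs_alpha (equilibrium_alpha (hb i) y_eq (y_pos i)).
- by move=> i; apply: le_inv_diag => // l; apply/ltW/xs_pos.
Qed.
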